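(* Let $M$ be a left Ehresmann monoid with semilattice of projections $E$ and let $T$ be a submonoid of $M$ with $M=\langle E\cup T\rangle_{(2)}$, such that $M$ has uniqueness of $T$-normal forms. Define a unary operation $*$ on $M$ as follows: if $a=t_0e_1t_1\cdots t_{n-1}e_nt_n$ is the $T$-normal form of $a$, put $a^*=e_n$ if $n\ge1$ and $t_n=1$, and $a^*=1$ otherwise. Then $M$, with $+$ and $*$, is a $*$-left Ehresmann monoid; in particular $a^*$ is the least right identity of $a$ in $E$.
   Context: A left Ehresmann monoid is a monoid $M$ with a unary operation $a\mapsto a^+$ satisfying $x^+x=x$, $(x^+y^+)^+=x^+y^+$, $x^+y^+=y^+x^+$, $(xy)^+=(xy^+)^+$; $E=\{a^+:a\in M\}$ is a semilattice (ordered by $e\le f$ iff $ef=e$). $\langle A\rangle_{(2)}$ is the subsemigroup generated by $A$. For a submonoid $T$ with $M=\langle E\cup T\rangle_{(2)}$, a $T$-normal form of $a\in M$ is an expression $a=t_0e_1t_1\cdots e_nt_n$ with $n\ge0$, $e_1,\dots,e_n\in E\setminus\{1\}$, $t_1,\dots,t_{n-1}\in T\setminus\{1\}$, $t_0,t_n\in T$ and $e_i<(t_ie_{i+1}\cdots e_nt_n)^+$ for $1\le i\le n$; $M$ has uniqueness of $T$-normal forms if each element has exactly one such expression (as a sequence). A $*$-left Ehresmann monoid is a monoid with two unary operations $+,*$ such that $(M,+)$ is left Ehresmann, $M$ satisfies $xx^*=x$, $(x^* )^*=x^*$, $x^*y^*=y^*x^*$, $(xy^* )^*y^*=(xy^*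 )^*$ (equivalently $\{a^*\}$ is a semilattice and $a^*$ is the least right identity of $a$ in it), and $(x^* )^+=x^*$, $(x^+)^*=x^+$. *)

From Stdlib Require Import List.
Import ListNotations.
Set Implicit Arguments.

Section Defs.
Variables (M : Type) (mul : M -> M -> M) (one : M).

Definition is_monoid : Prop :=
  (forall x y z, mul x (mul y z) = mul (mul x y) z) /\
  (forall x, mul one x = x) /\ (forall x, mul x one = x).

Definition is_left_ehresmann (plus : M -> M) : Prop :=
  is_monoid /\
  (forall x, mul (plus x) x = x) /\
  (forall x y, plus (mul (plus x) (plus y)) = mul (plus x) (plus y)) /\
  (forall x y, mul (plus x) (plus y) = mul (plus y) (plus x)) /\
  (forall x y, plus (mul x y) = plus (mul x (plus y))).

Definition inE (plus : M -> M) (e : M) : Prop := exists a, e = plus a.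

Definition sl_le (e f : M) : Prop := mul e f = e.
Definition sl_lt (e f : M) : Prop := sl_le e f /\ e <> f.

Definition is_submonoid (T : M -> Prop) : Prop :=
  T one /\ (forall x y, T x -> T y -> T (mul x y)).

Inductive gen2 (A : M -> Prop) : M -> Prop :=
| gen2_base : forall x, A x -> gen2 A x
| gen2_mul : forall x y, gen2 A x -> gen2 A y -> gen2 A (mul x y).

(* An expression t0 e1 t1 ... en tn is coded by t0 and the list
   [(e1,t1); ...; (en,tn)].  prod_tail l = e_i t_i ... e_n t_n. *)
Fixpoint prod_tail (l : list (M * M)) : M :=
  match l with
  | [] => one
  | (e, t) :: l' => mul e (mul t (prod_tail l'))
  end.

Definition eval_expr (t0 : M) (l : list (M * M)) : M := mul t0 (prod_tail l).

Fixpoint nf_conds (plus : M -> M) (T : M -> Prop) (l : list (M * M)) : Prop :=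
  match l with
  | [] => True
  | (e, t) :: l' =>
      inE plus e /\ e <> one /\ T t /\ (l' <> [] -> t <> one) /\
      sl_lt e (plus (mul t (prod_tail l'))) /\ nf_conds plus T l'
  end.

Definition is_TNF (plus : M -> M) (T : M -> Prop) (a t0 : M)
  (l : list (M * M)) : Prop :=
  a = eval_expr t0 l /\ T t0 /\ nf_conds plus T l.

Definition unique_TNF (plus : M -> M) (T : M -> Prop) : Prop :=
  forall a, (exists t0 l, is_TNF plus T a t0 l) /\
    (forall t0 l t0' l', is_TNF plus T a t0 l -> is_TNF plus T a t0' l' ->
       t0 = t0' /\ l = l').

Definition star_value (l : list (M * M)) (s : M) : Prop :=
  (l = [] /\ s = one) \/
  (exists l' e t, l = l' ++ [(e, t)] /\
     ((t = one /\ s = e) \/ (t <> one /\ s = one))).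

Definition is_star_left_ehresmann (plus star : M -> M) : Prop :=
  is_left_ehresmann plus /\
  (forall x, mul x (star x) = x) /\
  (forall x, star (star x) = star x) /\
  (forall x y, mul (star x) (star y) = mul (star y) (star x)) /\
  (forall x y, mul (star (mul x (star y))) (star y) = star (mul x (star y))) /\
  (forall x, plus (star x) = star x) /\
  (forall x, star (plus x) = plus x).

End Defs.

(* Every product t0 e1 t1 ... en tn of elements of E and T can be rewritten,
   from right to left, into T-normal form: a projection e in front of a normal
   form s is absorbed into t0 when e s^+ = s^+, is merged into e1 when t0 = 1,
   and otherwise becomes a new first projection e s^+.  In this process a last
   factor (g, 1) stays a last factor (g', 1) with g' <= g.  If a e = a, appending
   (e, 1) to the normal form of a and normalising gives, by uniqueness, the normal
   form of a again; hence it ends with (a^*, 1) and a^* <= e.  Conversely a a^* = a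
   is immediate, so a^* is the least right identity of a in E, from which all
   the axioms of a *-left Ehresmann monoid follow. *)

From Pilot Require Import Defs.
From Stdlib Require Import List Classical.
Import ListNotations.
Set Implicit Arguments.

Section NormalForms.
Variables (M : Type) (mul : M -> M -> M) (one : M) (plus : M -> M) (T : M -> Prop).
Hypothesis HLE : is_left_ehresmann mul one plus.
Hypothesis HT : is_submonoid mul one T.
Local Notation "x ** y" := (mul x y) (at level 40, left associativity).
Local Notation pt := (prod_tail mul one).
Local Notation E := (inE plus).
Local Notation nf := (nf_conds mul one plus T).
Local Notation sl_le := (sl_le mul).
Local Notation sl_lt := (sl_lt mul).

Lemma mul_assoc x y z : x ** (y ** z) = x ** y ** z.
Proof. apply HLE. Qed.

Lemma mul_1_l x : one ** x = x.
Proof. apply HLE. Qed.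

Lemma mul_1_r x : x ** one = x.
Proof. apply HLE. Qed.

Lemma plus_mul_l x : plus x ** x = x.
Proof. apply HLE. Qed.

Lemma T_one : T one.
Proof. apply HT. Qed.

Lemma T_mul x y : T x -> T y -> T (x ** y).
Proof. apply HT. Qed.

Lemma plus_E x : E (plus x).
Proof. exists x. reflexivity. Qed.

Lemma plus_one : plus one = one.
Proof. rewrite <- (mul_1_r (plus one)). apply plus_mul_l. Qed.

Lemma E_one : E one.
Proof. exists one. symmetry. apply plus_one. Qed.

Lemma plus_E_id e : E e -> plus e = e.
Proof.
  intros [a ->]. rewrite <- (mul_1_r (plus a)) at 1. rewrite <- plus_one.
  destruct HLE as (_ & _ & plus_mul_plus & _). rewrite plus_mul_plus, plus_one.
  apply mul_1_r.
Qed.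

Lemma E_idem e : E e -> e ** e = e.
Proof. intros He. rewrite <- (plus_E_id He) at 1. apply plus_mul_l. Qed.

Lemma E_mul e f : E e -> E f -> E (e ** f).
Proof. intros [a ->] [b ->]. exists (plus a ** plus b). symmetry. apply HLE. Qed.

Lemma E_comm e f : E e -> E f -> e ** f = f ** e.
Proof. intros [a ->] [b ->]. apply HLE. Qed.

Lemma E_absorb e f : E e -> E f -> f ** (e ** f) = e ** f.
Proof.
  intros He Hf. rewrite mul_assoc, (E_comm Hf He), <- mul_assoc, (E_idem Hf).
  reflexivity.
Qed.

Lemma E_mul_eq_one e f : E e -> E f -> e ** f = one -> f = one.
Proof.
  intros He Hf H. rewrite <- (mul_1_r f), <- H, (E_absorb He Hf). reflexivity.
Qed.

Lemma E_mul_plus_fix e s : e ** plus s = plus s -> e ** s = s.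
Proof. intros H. rewrite <- (plus_mul_l s), mul_assoc, H. reflexivity. Qed.

Lemma sl_le_mul e f g : sl_le f g -> sl_le (e ** f) g.
Proof. unfold Defs.sl_le. intros H. rewrite <- mul_assoc, H. reflexivity. Qed.

Lemma sl_lt_mul_l e f : E f -> e ** f <> f -> sl_lt (e ** f) f.
Proof. intros Hf Hne. split; [|exact Hne]. apply sl_le_mul, E_idem, Hf. Qed.

Lemma sl_lt_mul e f g : E e -> E f -> sl_lt f g -> sl_lt (e ** f) g.
Proof.
  intros He Hf [Hfg Hne]. split; [now apply sl_le_mul|].
  intros Heq. apply Hne. rewrite <- Hfg, <- Heq, (E_absorb He Hf). reflexivity.
Qed.

Lemma pt_snoc_one l g : pt (l ++ [(g, one)]) = pt l ** g.
Proof.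
  induction l as [|[e t] l IH]; simpl.
  - rewrite !mul_1_r, mul_1_l. reflexivity.
  - rewrite IH, !mul_assoc. reflexivity.
Qed.

Lemma nf_Forall l : nf l -> Forall (fun p => E (fst p) /\ T (snd p)) l.
Proof.
  induction l as [|[e t] l IH]; simpl; intros Hl; constructor.
  - split; apply Hl.
  - apply IH, Hl.
Qed.

Lemma nf_single e : E e -> e <> one -> nf [(e, one)].
Proof.
  intros He Hne. simpl. rewrite mul_1_r, plus_one.
  repeat split; auto using T_one. apply mul_1_r.
Qed.

Definition ends_below (f : M) (l : list (M * M)) : Prop :=
  exists pre g, l = pre ++ [(g, one)] /\ g <> one /\ sl_le g f.

Lemma ends_below_single e : E e -> e <> one -> ends_below e [(e, one)].
Proof.
  intros He Hne. exists [], e. split; [reflexivity|]. split; [exact Hne|].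
  apply E_idem, He.
Qed.

Lemma ends_below_cons f p l : ends_below f l -> ends_below f (p :: l).
Proof. intros (pre & g & -> & Hg). exists (p :: pre), g. auto. Qed.

Lemma ends_below_mul_head f e g v l :
  E e -> E g -> ends_below f ((g, v) :: l) -> ends_below f ((e ** g, v) :: l).
Proof.
  intros He Hg ([|p pre] & g' & Hl & Hg'1 & Hg'f); simpl in Hl; injection Hl.
  - intros -> -> ->. exists [], (e ** g'). split; [reflexivity|]. split.
    + intros H. apply Hg'1. exact (E_mul_eq_one He Hg H).
    + now apply sl_le_mul.
  - intros -> _. exists ((e ** g, v) :: pre), g'. auto.
Qed.

Lemma nf_cons e w l : E e -> T w -> nf l ->
  exists u l', e ** (w ** pt l) = u ** pt l' /\ T u /\ nf l' /\
    (forall f, ends_below f l -> ends_below f l').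
Proof.
  intros He Hw Hl.
  destruct (classic (w = one /\ l <> [])) as [[-> Hne] | Hgap].
  - destruct l as [|[g v] l]; [contradiction|].
    destruct Hl as (Hg & Hg1 & Hv & Hvl & Hlt & Hl).
    exists one, ((e ** g, v) :: l). simpl. split.
    { rewrite !mul_1_l, mul_assoc. reflexivity. }
    split; [exact T_one|]. split.
    + refine (conj (E_mul He Hg)
        (conj _ (conj Hv (conj Hvl (conj (sl_lt_mul He Hg Hlt) Hl))))).
      intros H. exact (Hg1 (E_mul_eq_one He Hg H)).
    + intros f. now apply ends_below_mul_head.
  - remember (w ** pt l) as s eqn:Hs.
    destruct (classic (e ** plus s = plus s)) as [Hfix | Hnfix].
    + exists w, l. rewrite <- Hs. split; [now apply E_mul_plus_fix|]. auto.
    + exists one, ((e ** plus s, w) :: l). simpl. rewrite <- Hs. split.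
      { rewrite mul_1_l, <- mul_assoc, plus_mul_l. reflexivity. }
      split; [exact T_one|]. split; [|auto using ends_below_cons].
      refine (conj (E_mul He (plus_E s))
        (conj _ (conj Hw (conj _ (conj (sl_lt_mul_l (plus_E s) Hnfix) Hl))))).
      * intros H. apply Hnfix. rewrite H. symmetry. exact (E_mul_eq_one He (plus_E s) H).
      * intros Hl1 Hw1. exact (Hgap (conj Hw1 Hl1)).
Qed.

Lemma nf_app l r : Forall (fun p => E (fst p) /\ T (snd p)) l -> nf r ->
  exists u l', pt (l ++ r) = u ** pt l' /\ T u /\ nf l' /\
    (forall f, ends_below f r -> ends_below f l').
Proof.
  intros Hl Hr. induction Hl as [|[e t] l [He Ht] _ IH]; simpl.
  - exists one, r. rewrite mul_1_l. auto using T_one.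
  - destruct IH as (u & l1 & Heq & Hu & Hl1 & Hend).
    destruct (@nf_cons e (t ** u) l1 He (T_mul Ht Hu) Hl1)
      as (u' & l' & Heq' & Hu' & Hl' & Hend').
    exists u', l'. rewrite Heq, (mul_assoc t). repeat split; auto.
Qed.

Lemma star_value_snoc_one l g s : star_value one (l ++ [(g, one)]) s -> s = g.
Proof.
  intros [[Hc _] | (l0 & e & t & Hc & Hs)].
  - destruct (app_cons_not_nil _ _ _ (eq_sym Hc)).
  - apply app_inj_tail in Hc as [_ Hc]. injection Hc as -> ->.
    destruct Hs as [[_ ->] | [Hc _]]; [reflexivity | contradiction].
Qed.

Variable star : M -> M.
Hypothesis HU : unique_TNF mul one plus T.
Hypothesis HS : forall a t0 l, is_TNF mul one plus T a t0 l -> star_value one l (star a).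

Lemma star_E_mul a : E (star a) /\ a ** star a = a.
Proof.
  destruct (proj1 (HU a)) as (t0 & l & Hn).
  pose proof (HS Hn) as Hv. destruct Hn as (Ha & _ & Hl).
  destruct Hv as [[_ ->] | (l0 & e & t & -> & [[-> ->] | [_ ->]])];
    try (split; [exact E_one | apply mul_1_r]).
  apply nf_Forall, Forall_app in Hl as [_ Hl].
  apply Forall_inv in Hl as [He _]. simpl in He.
  split; [exact He|]. rewrite Ha. unfold eval_expr.
  rewrite pt_snoc_one, <- !mul_assoc, (E_idem He). reflexivity.
Qed.

Lemma star_least a e : E e -> a ** e = a -> sl_le (star a) e.
Proof.
  intros He Hae. destruct (classic (e = one)) as [-> | Hne]; [apply mul_1_r|].
  destruct (proj1 (HU a)) as (t0 & l & Hn).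
  pose proof Hn as (Ha & Ht0 & Hl).
  destruct (nf_app [(e, one)] (nf_Forall l Hl) (nf_single He Hne))
    as (u & l' & Heq & Hu & Hl' & Hend).
  destruct (Hend e (ends_below_single He Hne)) as (pre & g & Hl'g & _ & Hge).
  assert (Hn' : is_TNF mul one plus T a (t0 ** u) l').
  { split; [|split; [now apply T_mul | exact Hl']].
    unfold eval_expr. rewrite <- Hae, Ha. unfold eval_expr.
    rewrite <- mul_assoc, <- pt_snoc_one, Heq, mul_assoc. reflexivity. }
  destruct (proj2 (HU a) _ _ _ _ Hn Hn') as [_ <-].
  pose proof (HS Hn) as Hv. rewrite Hl'g in Hv.
  rewrite (star_value_snoc_one _ _ Hv). exact Hge.
Qed.

Lemma star_E_id e : E e -> star e = e.
Proof.
  intros He. destruct (star_E_mul e) as [Hs Hes].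
  pose proof (star_least He (E_idem He)) as Hle. unfold Defs.sl_le in Hle.
  rewrite <- Hle, (E_comm Hs He). exact Hes.
Qed.

End NormalForms.

Theorem mainTheorem2 (M : Type) (mul : M -> M -> M) (one : M)
  (plus : M -> M) (T : M -> Prop) (star : M -> M) :
  is_left_ehresmann mul one plus ->
  is_submonoid mul one T ->
  (forall a, gen2 mul (fun x => inE plus x \/ T x) a) ->
  unique_TNF mul one plus T ->
  (forall a t0 l, is_TNF mul one plus T a t0 l -> star_value one l (star a)) ->
  is_star_left_ehresmann mul one plus star /\
  (forall a, inE plus (star a) /\ mul a (star a) = a /\
     (forall e, inE plus e -> mul a e = a -> sl_le mul (star a) e)).
Proof.
  intros HLE HT _ HU HS.
  pose proof (star_E_mul HLE star HU HS) as star_spec.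
  pose proof (star_least HLE HT star HU HS) as least.
  pose proof (star_E_id HLE HT star HU HS) as star_id.
  split; [split; [exact HLE | repeat split]|].
  - intros x. apply star_spec.
  - intros x. apply star_id, star_spec.
  - intros x y. apply (E_comm HLE); apply star_spec.
  - intros x y. apply least; [apply star_spec|].
    rewrite <- (mul_assoc HLE), (E_idem HLE (proj1 (star_spec y))). reflexivity.
  - intros x. apply (plus_E_id HLE), star_spec.
  - intros x. apply star_id, plus_E.
  - intros a. repeat split; try apply star_spec. now apply least.
Qed.
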